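(* Let $p$ be a prime and $b$ an integer with $0<b<p$. If $S^G_{1,b}$ is generated by 4 invariants (i.e. $|\mathrm{inv}_{1,b}|=4$, so $R=\mathbb{C}[y_0,y_1,y_2,y_3]$), then $$\ker\varphi_{1,b}=\langle\, y_1^{p-b^{-1}}-y_0y_2,\ \ y_2^{p-b}-y_1y_3,\ \ y_1^{p-b^{-1}-1}y_2^{p-b-1}-y_0y_3\,\rangle.$$
   Context: Let $S=\mathbb{C}[x_1,x_2]$ (standard grading), $\zeta=e^{2\pi i/p}$, $G=\mathbb{Z}/p\mathbb{Z}=\langle\zeta\rangle$ acting on $S$ by $x_1\mapsto\zeta x_1$, $x_2\mapsto\zeta^bx_2$, with invariant ring $S^G_{1,b}$ (spanned by monomials $x_1^cx_2^d$ with $c+bd\equiv0\pmod p$). $\mathrm{inv}_{1,b}$ denotes the minimal set of monomial generators of $S^G_{1,b}$ as a $\mathbb{C}$-algebra: the nonconstant invariant monomials that are not a product of two nonconstant invariant monomials. Writing $\mathrm{inv}_{1,b}=\{z_0,\dots,z_n\}$ in lexicographic order with $x_1>x_2$ (i.e. in decreasing order of the exponent of $x_1$), $R=\mathbb{C}[y_0,\dots,y_n]$ with $\deg y_i=\deg z_i$, and $\varphi_{1,b}:R\to S^G_{1,b}$ is the $\mathbb{C}$-algebra map $y_i\mapsto z_i$. $b^{-1}$ is the unique integer $0<b^{-1}<p$ with $bb^{-1}\equiv1\pmod p$. *)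

From HB Require Import structures.
From mathcomp Require Import all_boot all_order all_algebra.
From mathcomp Require Import mpoly.
From mathcomp Require Import complex.
From mathcomp Require Import reals.
Set Implicit Arguments. Unset Strict Implicit. Unset Printing Implicit Defensive.
Import Order.TTheory GRing.Theory Num.Theory.
Local Open Scope ring_scope.

(* A monomial x1^c x2^d of S = C[x1,x2] is encoded by its exponent pair (c,d). *)
(* It is G-invariant (for the action x1 -> zeta x1, x2 -> zeta^b x2) iff
   c + b d = 0 mod p. *)
Definition inv_monomial (p b : nat) (m : nat * nat) : Prop :=
  (p %| m.1 + b * m.2)%N.

Definition nc_inv_monomial (p b : nat) (m : nat * nat) : Prop :=
  m <> (0%N, 0%N) /\ inv_monomial p b m.

Definition in_inv_1b (p b : nat) (m : nat * nat) : Prop :=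
  nc_inv_monomial p b m /\
  ~ (exists m1 m2, nc_inv_monomial p b m1 /\ nc_inv_monomial p b m2 /\
                   m = (m1.1 + m2.1, m1.2 + m2.2)%N).

Definition monoS (K : comRingType) (m : nat * nat) : {mpoly K[2]} :=
  'X_(inord 0) ^+ m.1 * 'X_(inord 1) ^+ m.2.

Definition yv (K : comRingType) (i : nat) : {mpoly K[4]} := 'X_(inord i).

Definition phi (K : comRingType) (z : 'I_4 -> nat * nat)
  (f : {mpoly K[4]}) : {mpoly K[2]} :=
  mmap (fun c => c%:MP) (fun i => monoS K (z i)) f.

(* Once inv_{1,b} has four elements, the ordering forces them to be x1^p,
   x1^u x2, x1 x2^v and x2^p with u = p - b and v = p - b^{-1}; moreover
   u v = p + 1, since the invariant monomial x1^(b+1) x2^(v-1) must be a sum of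
   generators, and the only possibility is (v - 1) times x1^u x2.
   The three binomials then behave like a Groebner basis of ker phi. Rewriting
   y0 y2 -> y1^v, y1 y3 -> y2^u and y0 y3 -> y1^(v-1) y2^(u-1) brings every
   monomial to a standard one, divisible by none of y0 y2, y1 y3, y0 y3, and phi
   is injective on standard monomials: if phi (y^(a,b,c,d)) = x1^X x2^Y then
   u Y - X = p (c + u d - a) and v X - Y = p (v a + b - d), and these two numbers
   determine a standard exponent (a, b, c, d). *)

From HB Require Import structures.
From mathcomp Require Import all_boot all_order all_algebra.
From mathcomp Require Import mpoly complex reals.
From mathcomp Require Import zify ring.
From Stdlib Require Import Classical.
Set Implicit Arguments. Unset Strict Implicit. Unset Printing Implicit Defensive.
Import GRing.Theory.

Lemma ord4P (i : 'I_4) : [\/ i = inord 0, i = inord 1, i = inord 2 | i = inord 3].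
Proof.
by case: i => -[|[|[|[|//]]]] lti; [constructor 1|constructor 2|constructor 3|constructor 4];
  apply: val_inj; rewrite /= inordK.
Qed.

Section InvariantMonomials.
Variables p b : nat.

Lemma nc_inv_monomial_deg_gt0 m : nc_inv_monomial p b m -> 0 < m.1 + m.2.
Proof. by case: m => -[|?] [|?] []. Qed.

Lemma nc_inv_monomial_ind (P : nat * nat -> Prop) :
  (forall m, in_inv_1b p b m -> P m) ->
  (forall m1 m2, P m1 -> P m2 -> P (m1.1 + m2.1, m1.2 + m2.2)) ->
  forall m, nc_inv_monomial p b m -> P m.
Proof.
move=> Pinv PD m; have [n] := ubnP (m.1 + m.2); elim: n m => // n IH m lt_mn nc_m.
have [m_inv|m_not_inv] := classic (in_inv_1b p b m); first exact: Pinv.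
have [m1 [m2 [nc1 [nc2 Em]]]] : exists m1 m2, nc_inv_monomial p b m1 /\
    nc_inv_monomial p b m2 /\ m = (m1.1 + m2.1, m1.2 + m2.2).
  by apply: NNPP => indec; apply: m_not_inv.
have := nc_inv_monomial_deg_gt0 nc1; have := nc_inv_monomial_deg_gt0 nc2.
rewrite Em /= in lt_mn; rewrite Em => pos2 pos1.
by apply: PD; apply: IH => //; lia.
Qed.

Lemma nc_inv_monomial_x1_geq m : nc_inv_monomial p b m -> m.2 = 0 -> p <= m.1.
Proof.
case: m => -[|c] d [nz]; rewrite /inv_monomial /= => p_dvd d0; subst d; first by [].
by apply: dvdn_leq; rewrite // muln0 addn0 in p_dvd.
Qed.

Hypothesis p_prime : prime p.

Lemma in_inv_x1p : in_inv_1b p b (p, 0).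
Proof.
have p_gt0 := prime_gt0 p_prime.
split; first by split; [case; lia | rewrite /inv_monomial /= muln0 addn0].
move=> [m1 [m2 [nc1 [nc2 [E1 E2]]]]].
by have := nc_inv_monomial_x1_geq nc1; have := nc_inv_monomial_x1_geq nc2; lia.
Qed.

Lemma in_inv_x1_le_p m : in_inv_1b p b m -> m.1 <= p.
Proof.
move=> m_inv; rewrite leqNgt; apply/negP => lt_pm.
case: m_inv => -[nz p_dvd]; apply; exists (p, 0), (m.1 - p, m.2).
split; first exact: in_inv_x1p.1.
split; last by case: m {nz p_dvd} lt_pm => c d /= ?; congr pair; lia.
split; first by case; lia.
rewrite /inv_monomial /= -(dvdn_addr _ (dvdnn p)).
by rewrite (_ : p + _ = m.1 + b * m.2) //; lia.
Qed.

Hypothesis b_range : 0 < b < p.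

Lemma nc_inv_monomial_x2_geq m : nc_inv_monomial p b m -> m.1 = 0 -> p <= m.2.
Proof.
case: m => c -[|d] [nz]; rewrite /inv_monomial /= => p_dvd c0; subst c; first by [].
case/andP: b_range => b_gt0 b_ltp.
by move: p_dvd; rewrite add0n Euclid_dvdM // gtnNdvd //=; apply: dvdn_leq.
Qed.

Lemma in_inv_x2p : in_inv_1b p b (0, p).
Proof.
have p_gt0 := prime_gt0 p_prime.
split; first by split; [case; lia | rewrite /inv_monomial /= dvdn_mull].
move=> [m1 [m2 [nc1 [nc2 [E1 E2]]]]].
by have := nc_inv_monomial_x2_geq nc1; have := nc_inv_monomial_x2_geq nc2; lia.
Qed.

Lemma in_inv_x1u_x2 : in_inv_1b p b (p - b, 1).
Proof.
split; first by split; [case | rewrite /inv_monomial /= muln1 subnK //; lia].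
move=> [m1 [m2 [nc1 [nc2 [E1 E2]]]]].
have [m1_2|m2_2] : m1.2 = 0 \/ m2.2 = 0 by lia.
- by have := nc_inv_monomial_x1_geq nc1 m1_2; lia.
- by have := nc_inv_monomial_x1_geq nc2 m2_2; lia.
Qed.

Variable binv : nat.
Hypotheses (binv_range : 0 < binv < p) (b_binv : b * binv = 1 %[mod p]).

Lemma p_dvd_1_bv : p %| 1 + b * (p - binv).
Proof.
have /andP[_ binv_lt] := binv_range.
have b_binv_le : b * binv <= b * p by rewrite leq_mul2l ltnW ?orbT.
have b_binv_eq : b * binv = b * binv %/ p * p + 1.
  by rewrite {1}(divn_eq (b * binv) p) b_binv modn_small ?prime_gt1.
apply/dvdnP; exists (b - b * binv %/ p).
rewrite mulnBr mulnBl; lia.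
Qed.

Lemma in_inv_x1_x2v : in_inv_1b p b (1, p - binv).
Proof.
split; first by split; [case | exact: p_dvd_1_bv].
move=> [m1 [m2 [nc1 [nc2 [E1 E2]]]]].
have [m1_1|m2_1] : m1.1 = 0 \/ m2.1 = 0 by lia.
- by have := nc_inv_monomial_x2_geq nc1 m1_1; lia.
- by have := nc_inv_monomial_x2_geq nc2 m2_1; lia.
Qed.

End InvariantMonomials.

Section FourGenerators.
Variables (p b binv : nat) (z : 'I_4 -> nat * nat).
Hypotheses (p_prime : prime p) (b_range : 0 < b < p).
Hypotheses (binv_range : 0 < binv < p) (b_binv : b * binv = 1 %[mod p]).
Hypothesis z_inv : forall m, in_inv_1b p b m <-> exists i, z i = m.
Hypothesis z_sorted : forall i j : 'I_4, i < j -> (z j).1 < (z i).1.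

Let z_chain : [/\ (z (inord 1)).1 < (z (inord 0)).1, (z (inord 2)).1 < (z (inord 1)).1
  & (z (inord 3)).1 < (z (inord 2)).1].
Proof. by split; apply: z_sorted; rewrite !inordK. Qed.

Let z_in_inv i : in_inv_1b p b (z i).
Proof. by apply/z_inv; exists i. Qed.

Lemma z0E : z (inord 0) = (p, 0).
Proof.
have [i zi] := (z_inv _).1 (in_inv_x1p b p_prime).
have := in_inv_x1_le_p p_prime (z_in_inv (inord 0)).
case: z_chain => + + +.
by case: (ord4P i) zi => -> zi //; rewrite zi /=; lia.
Qed.

Lemma z3E : z (inord 3) = (0, p).
Proof.
have [i zi] := (z_inv _).1 (in_inv_x2p p_prime b_range).
case: z_chain => + + +.
by case: (ord4P i) zi => -> zi //; rewrite zi /=; lia.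
Qed.

Lemma z2E : z (inord 2) = (1, p - binv).
Proof.
have [i zi] := (z_inv _).1 (in_inv_x1_x2v p_prime b_range binv_range b_binv).
case: z_chain => lt10 lt21 lt32.
case: (ord4P i) zi => -> zi //.
- by rewrite zi /= in lt10; lia.
- by rewrite zi /= in lt21; lia.
- by move: z3E; rewrite zi => -[].
Qed.

Lemma z1E : z (inord 1) = (p - b, 1).
Proof.
have [i zi] := (z_inv _).1 (in_inv_x1u_x2 p_prime b_range).
have p_gt1 := prime_gt1 p_prime.
case: (ord4P i) zi => -> zi //; move: zi; rewrite ?z0E ?z3E ?z2E; try by case; lia.
(* Index 2 would mean b = p - 1; then x1 x2 is invariant and splits off z_1. *)
case=> u1 _; have [lt10 lt21 _] := z_chain; rewrite z0E z2E /= in lt10 lt21.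
have := z_in_inv (inord 1); case: (z (inord 1)) lt10 lt21 => c d /= c_lt c_gt z1_inv.
exfalso.
have d_gt0 : 0 < d.
  by case: d z1_inv => // z1_inv; have := nc_inv_monomial_x1_geq z1_inv.1 erefl; rewrite /=; lia.
case: z1_inv => -[_ p_dvd]; apply; exists (1, 1), (c - 1, d - 1).
split; first by split; [case | rewrite /inv_monomial /= muln1; apply/dvdnP; exists 1; lia].
split; last by congr pair; rewrite /=; lia.
split; first by case; lia.
rewrite /inv_monomial /= -(dvdn_addr _ (dvdnn p)) (_ : p + _ = c + b * d) //.
by have := leq_pmulr b d_gt0; rewrite mulnBr muln1; lia.
Qed.

Lemma nc_inv_monomial_span m : nc_inv_monomial p b m ->
  exists k0 k1 k2 k3 : nat,
    m = (k0 * p + k1 * (p - b) + k2, k1 + k2 * (p - binv) + k3 * p).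
Proof.
move: m; apply: nc_inv_monomial_ind => [m /z_inv [i <-]|m1 m2].
  case: (ord4P i) => ->; rewrite ?z0E ?z1E ?z2E ?z3E.
  - by exists 1, 0, 0, 0; congr pair; lia.
  - by exists 0, 1, 0, 0; congr pair; lia.
  - by exists 0, 0, 1, 0; congr pair; lia.
  - by exists 0, 0, 0, 1; congr pair; lia.
move=> [k0 [k1 [k2 [k3 ->]]]] [l0 [l1 [l2 [l3 ->]]]].
by exists (k0 + l0), (k1 + l1), (k2 + l2), (k3 + l3); congr pair; rewrite /=; lia.
Qed.

Lemma inv4_mul : (p - b) * (p - binv) = p + 1.
Proof.
have [_ lt21 _] := z_chain; rewrite z1E z2E /= in lt21.
have /andP[_ binv_lt] := binv_range.
have v_gt0 : 0 < p - binv by rewrite subn_gt0.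
have target_nc : nc_inv_monomial p b (b.+1, (p - binv).-1).
  split=> //; rewrite /inv_monomial /= (_ : b.+1 + _ = 1 + b * (p - binv)).
    exact: p_dvd_1_bv.
  by rewrite -{2}(prednK v_gt0) mulnS; lia.
have [k0 [k1 [k2 [k3 [E1 E2]]]]] := nc_inv_monomial_span target_nc.
case: k2 E1 E2 => [|k2] E1 E2; last by rewrite mulSn in E2; lia.
case: k3 E1 E2 => [|k3] E1 E2; last by rewrite mulSn in E2; lia.
case: k0 E1 => [|k0] E1; last by rewrite mulSn in E1; lia.
by rewrite -(prednK v_gt0) mulnS; lia.
Qed.

Lemma inv4_structure : [/\ z (inord 0) = (p, 0), z (inord 1) = (p - b, 1),
  z (inord 2) = (1, p - binv), z (inord 3) = (0, p) & (p - b) * (p - binv) = p + 1].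
Proof. by split; [exact: z0E | exact: z1E | exact: z2E | exact: z3E | exact: inv4_mul]. Qed.

End FourGenerators.

Definition standard (a b c d : nat) : bool :=
  ~~ [&& 0 < a & 0 < c] && ~~ [&& 0 < b & 0 < d] && ~~ [&& 0 < a & 0 < d].

Definition weight (p u v a b c d : nat) : nat * nat := (p * a + u * b + c, b + v * c + p * d).

Section WeightInjective.
Variables p u v : nat.
Hypotheses (p_gt0 : 0 < p) (uv : u * v = p + 1).

Lemma weight_standard_inj a b c d a' b' c' d' :
  standard a b c d -> standard a' b' c' d' ->
  weight p u v a b c d = weight p u v a' b' c' d' -> (a, b, c, d) = (a', b', c', d').
Proof.
move=> std std' [E1 E2].
have uvx x : u * (v * x) = p * x + x by rewrite mulnA uv mulnDl mul1n.
have vux x : v * (u * x) = p * x + x by rewrite mulnCA uvx.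
have E_uY_X : c + u * d + a' = c' + u * d' + a.
  apply/eqP; rewrite -(eqn_pmul2l p_gt0); apply/eqP.
  by have := congr1 (muln u) E2; rewrite !mulnDr !uvx; lia.
have E_vX_Y : v * a + b + d' = v * a' + b' + d.
  apply/eqP; rewrite -(eqn_pmul2l p_gt0); apply/eqP.
  by have := congr1 (muln v) E1; rewrite !mulnDr !vux; lia.
move: std std' {E1 E2}; rewrite /standard.
case: a E_uY_X E_vX_Y => [|a]; case: a' => [|a']; case: d => [|d];
  case: d' => [|d'] E_uY_X E_vX_Y //=.
all: rewrite -?eqn0Ngt => ? ?; congr (_, _, _, _); nia.
Qed.
End WeightInjective.

Local Open Scope ring_scope.

Lemma mmap_eq0_inj (n k : nat) (K : comNzRingType) (h : 'I_n -> {mpoly K[k]})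
    (w : 'X_{1..n} -> 'X_{1..k}) (g : {mpoly K[n]}) :
  (forall m, mmap1 h m = 'X_[w m]) -> {in msupp g &, injective w} ->
  mmap (@mpolyC _ K) h g = 0 -> g = 0.
Proof.
move=> hX w_inj g_eq0; apply/mpolyP => m0; rewrite mcoeff0.
have [m0_in|/memN_msupp_eq0 //] := boolP (m0 \in msupp g).
have := congr1 (mcoeff (w m0)) g_eq0; rewrite /mmap mcoeff0 raddf_sum.
rewrite (bigD1_seq m0) ?msupp_uniq //= big1_seq ?hX ?mul_mpolyC ?mcoeffZ ?mcoeffX ?eqxx.
  by rewrite mulr1 addr0.
move=> m /andP [ne_m m_in]; rewrite hX mul_mpolyC mcoeffZ mcoeffX.
by case: eqP => [/(w_inj _ _ m_in m0_in) eq_m|]; [rewrite eq_m eqxx in ne_m | rewrite mulr0].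
Qed.

HB.instance Definition _ (K : comNzRingType) (z : 'I_4 -> nat * nat) :=
  GRing.RMorphism.copy (phi z) (mmap (@mpolyC 2 K) (fun i => monoS K (z i))).

Section Monomials.
Variable K : comNzRingType.

Definition ymon (a b c d : nat) : {mpoly K[4]} :=
  yv K 0 ^+ a * yv K 1 ^+ b * yv K 2 ^+ c * yv K 3 ^+ d.

Lemma mpolyX_ymon (m : 'X_{1..4}) :
  'X_[m] = ymon (m (inord 0)) (m (inord 1)) (m (inord 2)) (m (inord 3)).
Proof.
rewrite mpolyXE_id !big_ord_recl big_ord0 mulr1 /ymon /yv !mulrA.
have Xi (i j : 'I_4) : val i = val j -> ('X_i : {mpoly K[4]}) ^+ m i = 'X_j ^+ m j.
  by move=> /val_inj ->.
by congr (_ * _ * _ * _); apply: Xi; rewrite /= inordK.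
Qed.

Lemma ymon_mpolyX a b c d : ymon a b c d = 'X_[[multinom nth 0%N [:: a; b; c; d] i | i < 4]].
Proof. by rewrite mpolyX_ymon !mnmE !inordK. Qed.

Definition mnm2 (e : nat * nat) : 'X_{1..2} := (U_(inord 0) *+ e.1 + U_(inord 1) *+ e.2)%MM.

Lemma mnm2E e : mnm2 e (inord 0) = e.1 /\ mnm2 e (inord 1) = e.2.
Proof.
by rewrite !mnmDE !mulmnE !mnm1E -!val_eqE /= !inordK //=; split; lia.
Qed.

Lemma mnm2_inj : injective mnm2.
Proof.
move=> e e' eq_e; have [e0 e1] := mnm2E e; have [e0' e1'] := mnm2E e'.
rewrite eq_e e0' in e0; rewrite eq_e e1' in e1.
by case: e e' e0 e1 {eq_e e0' e1'} => ? ? [? ?] /= -> ->.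
Qed.

Lemma monoS_mnm2 e : monoS K e = 'X_[mnm2 e].
Proof. by rewrite /monoS /mnm2 mpolyXD !mpolyXn. Qed.

End Monomials.

Section Phi.
Variables (K : comNzRingType) (p u v : nat) (z : 'I_4 -> nat * nat).
Hypotheses (z0 : z (inord 0) = (p, 0%N)) (z1 : z (inord 1) = (u, 1%N)).
Hypotheses (z2 : z (inord 2) = (1%N, v)) (z3 : z (inord 3) = (0%N, p)).

Lemma phi_yv i : phi z (yv K i) = monoS K (z (inord i)).
Proof. by rewrite /phi /yv mmapX mmap1U. Qed.

Lemma phi_ymon a b c d : phi z (ymon K a b c d) = monoS K (weight p u v a b c d).
Proof.
rewrite /ymon !rmorphM !rmorphXn /= !phi_yv z0 z1 z2 z3 /monoS /weight /=.
rewrite !expr0 !expr1 !mulr1 !mul1r !exprMn -!exprM !exprD; ring.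
Qed.

End Phi.

Section StandardForm.
Variables (K : comNzRingType) (u v : nat).

Definition in_ideal (g : {mpoly K[4]}) : Prop :=
  exists a1 a2 a3 : {mpoly K[4]},
    g = a1 * (yv K 1 ^+ v - yv K 0 * yv K 2) + a2 * (yv K 2 ^+ u - yv K 1 * yv K 3)
      + a3 * (yv K 1 ^+ (v - 1) * yv K 2 ^+ (u - 1) - yv K 0 * yv K 3).

Lemma in_ideal0 : in_ideal 0.
Proof. by exists 0, 0, 0; rewrite !mul0r !addr0. Qed.

Lemma in_idealD g h : in_ideal g -> in_ideal h -> in_ideal (g + h).
Proof.
move=> [a1 [a2 [a3 ->]]] [c1 [c2 [c3 ->]]].
by exists (a1 + c1), (a2 + c2), (a3 + c3); ring.
Qed.

Lemma in_idealMl h g : in_ideal g -> in_ideal (h * g).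
Proof. by move=> [a1 [a2 [a3 ->]]]; exists (h * a1), (h * a2), (h * a3); ring. Qed.

Lemma in_ideal_subtrans f g h : in_ideal (f - g) -> in_ideal (g - h) -> in_ideal (f - h).
Proof. by move=> Ifg /(in_idealD Ifg); rewrite addrA subrK. Qed.

Lemma ymon_reduce a b c d : ~~ standard a b c d ->
  exists a' b' c' d', (a' + d' < a + d)%N /\ in_ideal (ymon K a b c d - ymon K a' b' c' d').
Proof.
rewrite /standard => /nandP[/nandP[]|] /negbNE /andP[].
- case: a => // a _; case: c => // c _; exists a, (b + v)%N, c, d; split=> //.
  by exists (- ymon K a b c d), 0, 0; rewrite /ymon !exprS exprD; ring.
- case: b => // b _; case: d => // d _; exists a, b, (c + u)%N, d; split; first lia.
  by exists 0, (- ymon K a b c d), 0; rewrite /ymon !exprS exprD; ring.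
- case: a => // a _; case: d => // d _.
  exists a, (b + (v - 1))%N, (c + (u - 1))%N, d; split; first lia.
  by exists 0, 0, (- ymon K a b c d); rewrite /ymon !exprS !exprD; ring.
Qed.

Lemma ymon_standard_form a b c d : exists a' b' c' d',
  standard a' b' c' d' /\ in_ideal (ymon K a b c d - ymon K a' b' c' d').
Proof.
have [n] := ubnP (a + d); elim: n a b c d => // n IH a b c d lt_n.
have [std|/ymon_reduce [a1 [b1 [c1 [d1 [lt1 in1]]]]]] := boolP (standard a b c d).
  by exists a, b, c, d; rewrite subrr; split; last exact: in_ideal0.
have [a2 [b2 [c2 [d2 [std2 in2]]]]] := IH a1 b1 c1 d1 ltac:(lia).
by exists a2, b2, c2, d2; split; last exact: in_ideal_subtrans in1 in2.
Qed.

Definition standard_supp (g : {mpoly K[4]}) : Prop :=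
  {in msupp g, forall m : 'X_{1..4},
    standard (m (inord 0)) (m (inord 1)) (m (inord 2)) (m (inord 3))}.

Lemma mpoly_standard_form f : exists g, standard_supp g /\ in_ideal (f - g).
Proof.
elim/mpolyind: f => [|c m f _ _ [g [std_g in_fg]]].
  by exists 0; split; [move=> m; rewrite msupp0 | rewrite subrr; apply: in_ideal0].
have [a [b [c' [d [std_m in_m]]]]] := ymon_standard_form
  (m (inord 0)) (m (inord 1)) (m (inord 2)) (m (inord 3)).
rewrite -mpolyX_ymon ymon_mpolyX in in_m.
set m' := [multinom _ | i < 4] in in_m.
exists (c *: 'X_[m'] + g); split.
  move=> k /msuppD_le; rewrite mem_cat => /orP [/msuppZ_le|/std_g //].
  by rewrite msuppX inE => /eqP ->; rewrite /m' !mnmE !inordK.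
have -> : c *: 'X_[m] + f - (c *: 'X_[m'] + g) = c%:MP * ('X_[m] - 'X_[m']) + (f - g).
  by rewrite !mul_mpolyC scalerBr; ring.
exact/in_idealD/in_fg/in_idealMl.
Qed.

End StandardForm.

Section Kernel.
Variables (K : comNzRingType) (p u v : nat) (z : 'I_4 -> nat * nat).
Hypotheses (p_gt0 : (0 < p)%N) (uv : (u * v = p + 1)%N).
Hypotheses (z0 : z (inord 0) = (p, 0%N)) (z1 : z (inord 1) = (u, 1%N)).
Hypotheses (z2 : z (inord 2) = (1%N, v)) (z3 : z (inord 3) = (0%N, p)).

Lemma phi_in_ideal (g : {mpoly K[4]}) : in_ideal u v g -> phi z g = 0.
Proof.
have phi_binomial a b c d a' b' c' d' : weight p u v a b c d = weight p u v a' b' c' d' ->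
    phi z (ymon K a b c d - ymon K a' b' c' d') = 0.
  by move=> eq_w; rewrite rmorphB /= !(phi_ymon K z0 z1 z2 z3) eq_w subrr.
move=> [a1 [a2 [a3 ->]]].
have -> : yv K 1 ^+ v - yv K 0 * yv K 2 = ymon K 0 v 0 0 - ymon K 1 0 1 0 by rewrite /ymon; ring.
have -> : yv K 2 ^+ u - yv K 1 * yv K 3 = ymon K 0 0 u 0 - ymon K 0 1 0 1 by rewrite /ymon; ring.
have -> : yv K 1 ^+ (v - 1) * yv K 2 ^+ (u - 1) - yv K 0 * yv K 3 =
    ymon K 0 (v - 1) (u - 1) 0 - ymon K 1 0 0 1 by rewrite /ymon; ring.
have /andP[u_gt0 v_gt0] : (0 < u)%N && (0 < v)%N by rewrite -muln_gt0 uv addn1.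
rewrite !rmorphD !rmorphM /= !phi_binomial ?mulr0 ?addr0 //;
  rewrite /weight; congr pair; nia.
Qed.

Lemma phi_standard_eq0 (g : {mpoly K[4]}) : standard_supp g -> phi z g = 0 -> g = 0.
Proof.
move=> std_g; apply: mmap_eq0_inj (fun m => mnm2 (weight p u v
  (m (inord 0)) (m (inord 1)) (m (inord 2)) (m (inord 3)))) _ _ _.
  by move=> m; rewrite -monoS_mnm2 -(phi_ymon K z0 z1 z2 z3) -mpolyX_ymon /phi mmapX.
move=> m m' m_in m'_in /mnm2_inj /(weight_standard_inj p_gt0 uv (std_g _ m_in) (std_g _ m'_in)).
by case=> e0 e1 e2 e3; apply/mnmP => i; case: (ord4P i) => ->.
Qed.

Lemma ker_phi (f : {mpoly K[4]}) : phi z f = 0 <-> in_ideal u v f.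
Proof.
split; last exact: phi_in_ideal.
move=> phi_f; have [g [std_g in_fg]] := mpoly_standard_form u v f.
have phi_g : phi z g = 0.
  by have := phi_in_ideal in_fg; rewrite rmorphB /= phi_f sub0r => /eqP; rewrite oppr_eq0 => /eqP.
by rewrite -(subr0 f) -(phi_standard_eq0 std_g phi_g).
Qed.

End Kernel.

Theorem proposition4p2 (R : realType) (p b binv : nat) (z : 'I_4 -> nat * nat) :
  prime p -> (0 < b < p)%N ->
  (* binv = b^{-1}: the unique integer 0 < binv < p with b * binv = 1 mod p *)
  (0 < binv < p)%N -> (b * binv = 1 %[mod p])%N ->
  (* inv_{1,b} = {z_0, z_1, z_2, z_3}, listed in decreasing order of the x1-exponent *)
  (forall m : nat * nat, in_inv_1b p b m <-> exists i, z i = m) ->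
  (forall i j : 'I_4, (i < j)%N -> ((z j).1 < (z i).1)%N) ->
  forall f : {mpoly R[i][4]},
    phi z f = 0 <->
    exists a1 a2 a3 : {mpoly R[i][4]},
      f = a1 * (yv _ 1 ^+ (p - binv) - yv _ 0 * yv _ 2)
        + a2 * (yv _ 2 ^+ (p - b) - yv _ 1 * yv _ 3)
        + a3 * (yv _ 1 ^+ (p - binv - 1) * yv _ 2 ^+ (p - b - 1) - yv _ 0 * yv _ 3).
Proof.
move=> p_prime b_range binv_range b_binv z_inv z_sorted f.
have [z0 z1 z2 z3 uv] := inv4_structure p_prime b_range binv_range b_binv z_inv z_sorted.
exact: ker_phi (prime_gt0 p_prime) uv z0 z1 z2 z3 f.
Qed.
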